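(* Let $\Gamma\{-\}$ be a unary context and $A$ a formula. If both $\Gamma\{A\}$ and $\Gamma\{A^\perp\}$ are cut-free provable, then $\Gamma\{\}$ is cut-free provable.
   Context: Fix a countable set of atoms; each atom $\alpha$ has a dual negative atom $\alpha^\perp$. Formulas: $A,B ::= \alpha \mid \alpha^\perp \mid A\land B \mid A\lor B \mid \Box A \mid \Diamond A$. Negation $A^\perp$: $(\alpha)^\perp=\alpha^\perp$, $(\alpha^\perp)^\perp=\alpha$, $(A\land B)^\perp=A^\perp\lor B^\perp$, $(A\lor B)^\perp=A^\perp\land B^\perp$, $(\Box A)^\perp=\Diamond A^\perp$, $(\Diamond A)^\perp=\Box A^\perp$. A (nested) sequent is given by $\Gamma,\Delta ::= \cdot \mid \Gamma, A \mid \Gamma, [\Delta]$, where $\cdot$ is the empty sequent; sequents are taken up to exchange, and $\Gamma,\Delta$ denotes juxtaposition. A unary context is given by $\Gamma\{-\} ::= \Delta,\{-\} \mid \Delta,[\Gamma\{-\}]$; $\Gamma\{\Delta\}$ is the result of filling the hole with $\Delta$, and $\Gamma\{\}$ means $\Gamma\{\cdot\}$. Depth: $\mathrm{depth}(\Delta,\{-\})=0$, $\mathrm{depth}(\Delta,[\Gamma\{-\}])=\mathrm{depth}(\Gamma\{-\})+1$. Rules: (id) $\Gamma\{\alpha^\perp,\alpha\}$ with no premises ($\alpha$ an atom); ($\land$) from $\Gamma\{A\}$ and $\Gamma\{B\}$ infer $\Gamma\{A\land B\}$; ($\lor$) from $\Gamma\{A,B\}$ infer $\Gamma\{A\lor B\}$;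 ($\Box$) from $\Gamma\{[\Diamond A^\perp, A]\}$ infer $\Gamma\{\Box A\}$; ($\Diamond$) from $\Gamma\{\Delta\{A\},\Diamond A\}$ infer $\Gamma\{\Delta\{\},\Diamond A\}$, provided $\mathrm{depth}(\Delta\{-\})>0$. Cut-free provable = derivable using these rules. *)

From Stdlib Require Import List.
Import ListNotations.

Inductive form : Type :=
| Atom : nat -> form
| NAtom : nat -> form
| And : form -> form -> form
| Or : form -> form -> form
| Box : form -> form
| Dia : form -> form.

Fixpoint neg (A : form) : form :=
  match A with
  | Atom a => NAtom a
  | NAtom a => Atom a
  | And A B => Or (neg A) (neg B)
  | Or A B => And (neg A) (neg B)
  | Box A => Dia (neg A)
  | Dia A => Box (neg A)
  end.

Inductive item : Type :=
| IF : form -> item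
| IB : list item -> item.

Definition sequent := list item.

(* Unary contexts: Delta,{-}  |  Delta,[Gamma{-}] *)
Inductive ctx : Type :=
| Hole : sequent -> ctx
| Nest : sequent -> ctx -> ctx.

Fixpoint fill (G : ctx) (X : sequent) : sequent :=
  match G with
  | Hole D => D ++ X
  | Nest D G' => D ++ [IB (fill G' X)]
  end.

Fixpoint depth (G : ctx) : nat :=
  match G with
  | Hole _ => 0
  | Nest _ G' => S (depth G')
  end.

(* Sequents are taken up to exchange, at every nesting level. *)
Inductive seq_eq : sequent -> sequent -> Prop :=
| se_refl l : seq_eq l l
| se_cons x y l l' : item_eq x y -> seq_eq l l' -> seq_eq (x :: l) (y :: l')
| se_swap x y l : seq_eq (x :: y :: l) (y :: x :: l)
| se_trans l1 l2 l3 : seq_eq l1 l2 -> seq_eq l2 l3 -> seq_eq l1 l3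
with item_eq : item -> item -> Prop :=
| ie_F A : item_eq (IF A) (IF A)
| ie_B G G' : seq_eq G G' -> item_eq (IB G) (IB G').

Inductive provable : sequent -> Prop :=
| p_exch G G' : seq_eq G G' -> provable G -> provable G'
| p_id (C : ctx) (a : nat) :
    provable (fill C [IF (NAtom a); IF (Atom a)])
| p_and (C : ctx) (A B : form) :
    provable (fill C [IF A]) -> provable (fill C [IF B]) ->
    provable (fill C [IF (And A B)])
| p_or (C : ctx) (A B : form) :
    provable (fill C [IF A; IF B]) -> provable (fill C [IF (Or A B)])
| p_box (C : ctx) (A : form) :
    provable (fill C [IB [IF (Dia (neg A)); IF A]]) ->
    provable (fill C [IF (Box A)])
| p_dia (C D : ctx) (A : form) :
    0 < depth D ->
    provable (fill C (fill D [IF A] ++ [IF (Dia A)])) ->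
    provable (fill C (fill D [] ++ [IF (Dia A)])).

(* Cut is admissible because cut-free provability is complete for one particular model in
   which the calculus is also sound.  Its worlds are the sequents themselves, each world
   seeing the sequents nested inside its boxes; this accessibility relation is transitive
   and conversely well-founded, which makes Löb's box rule sound.  An unprovable sequent
   is refuted in this model by saturating it under the invertible rules and recursively
   replacing each boxed subsequent by a world refuting it.  The diamonds met on the way
   down are carried along as formulas that every deeper world must refute; a box [Box A]
   opened below [Dia (neg A)] is immediately provable, so each new box marks a fresh
   formula of the finite subformula closure and the recursion terminates.  Finally, if
   Gamma{} were unprovable, the world refuting it would, at the position of the hole,
   refute either Gamma{A} or Gamma{A^perp}. *)

From Stdlib Require Import List Permutation Classical Lia Wellfounded Relations.
Import ListNotations.

Scheme seq_eq_mut := Induction for seq_eq Sort Prop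
  with item_eq_mut := Induction for item_eq Sort Prop.

Lemma filter_length_mono {T} (f g : T -> bool) l :
  (forall x, In x l -> g x = true -> f x = true) -> length (filter g l) <= length (filter f l).
Proof.
  induction l as [|x l IH]; simpl; intros Hgf; auto.
  destruct (g x) eqn:Hg; [rewrite (Hgf x (or_introl eq_refl) Hg)|destruct (f x)];
    simpl; auto with arith.
Qed.

Lemma filter_length_mono_strict {T} (f g : T -> bool) l x0 :
  (forall x, In x l -> g x = true -> f x = true) -> In x0 l -> f x0 = true -> g x0 = false ->
  length (filter g l) < length (filter f l).
Proof.
  induction l as [|x l IH]; simpl; intros Hgf Hx0 Hf Hg; [easy|].
  destruct Hx0 as [->|Hx0].
  - rewrite Hf, Hg; simpl; apply le_n_S, filter_length_mono; auto.
  - destruct (g x) eqn:Hgx; [rewrite (Hgf x (or_introl eq_refl) Hgx)|destruct (f x)];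
      simpl; auto with arith.
Qed.

Lemma Forall2_In_l {T T'} (P : T -> T' -> Prop) l l' x :
  Forall2 P l l' -> In x l -> exists y, In y l' /\ P x y.
Proof.
  induction 1 as [|a b l l' Hab _ IH]; simpl; [easy|].
  intros [->|Hx]; [eauto|destruct (IH Hx) as (y & ? & ?); eauto].
Qed.

Lemma Forall2_In_r {T T'} (P : T -> T' -> Prop) l l' y :
  Forall2 P l l' -> In y l' -> exists x, In x l /\ P x y.
Proof.
  induction 1 as [|a b l l' Hab _ IH]; simpl; [easy|].
  intros [->|Hy]; [eauto|destruct (IH Hy) as (x & ? & ?); eauto].
Qed.

Lemma Forall2_stepwise {T} (rel : T -> T -> Prop) (ok : list T -> Prop) l :
  (forall pre x post pre', l = pre ++ x :: post -> Forall2 rel pre pre' ->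
     ok (pre' ++ x :: post) -> exists y, rel x y /\ ok (pre' ++ y :: post)) ->
  ok l -> exists l', Forall2 rel l l' /\ ok l'.
Proof.
  intros Hstep; enough (Hgen : forall post pre pre', l = pre ++ post -> Forall2 rel pre pre' ->
                          ok (pre' ++ post) -> exists l', Forall2 rel l l' /\ ok l')
    by (intros Hl; apply (Hgen l [] []); auto).
  induction post as [|x post IH]; intros pre pre' -> Hpre Hok.
  - rewrite app_nil_r in *; eauto.
  - destruct (Hstep pre x post pre') as (y & Hxy & Hy); auto.
    apply (IH (pre ++ [x]) (pre' ++ [y])); rewrite <- ?app_assoc; auto.
    apply Forall2_app; auto.
Qed.

Lemma in_split_pair {T} (x y : T) l :
  In x l -> In y l -> x <> y -> exists r, Permutation l (x :: y :: r).
Proof.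
  intros Hx Hy Hxy; apply in_split in Hx as (l1 & l2 & ->).
  assert (Hy' : In y (l1 ++ l2)) by (rewrite in_app_iff in *; simpl in Hy; intuition congruence).
  apply in_split in Hy' as (l3 & l4 & Hl); exists (l3 ++ l4).
  eapply perm_trans; [apply Permutation_sym, Permutation_middle|].
  rewrite Hl; apply perm_skip, Permutation_sym, Permutation_middle.
Qed.

Lemma fold_right_and_Forall {T} (P : T -> Prop) l :
  fold_right (fun j Q => P j /\ Q) True l <-> Forall P l.
Proof.
  induction l; simpl; rewrite ?Forall_cons_iff; intuition.
Qed.

(** * Exchange and derived rules *)

Lemma item_eq_refl x : item_eq x x.
Proof. destruct x; constructor; apply se_refl. Qed.

Lemma seq_eq_app_l L X Y : seq_eq X Y -> seq_eq (L ++ X) (L ++ Y).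
Proof. intros HXY; induction L; simpl; auto using se_cons, item_eq_refl. Qed.

Lemma Permutation_seq_eq X Y : Permutation X Y -> seq_eq X Y.
Proof.
  induction 1; eauto using se_refl, se_cons, se_swap, se_trans, item_eq_refl.
Qed.

Lemma seq_eq_fill C X Y : seq_eq X Y -> seq_eq (fill C X) (fill C Y).
Proof.
  intros HXY; induction C; simpl; apply seq_eq_app_l; auto using se_cons, se_refl, ie_B.
Qed.

Lemma provable_perm C X Y : Permutation X Y -> provable (fill C X) -> provable (fill C Y).
Proof. intros HXY; apply p_exch, seq_eq_fill, Permutation_seq_eq, HXY. Qed.

Fixpoint ctx_comp (C1 C2 : ctx) : ctx :=
  match C1, C2 with
  | Hole D, Hole D' => Hole (D ++ D')
  | Hole D, Nest D' C => Nest (D ++ D') C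
  | Nest D C, _ => Nest D (ctx_comp C C2)
  end.

Lemma fill_ctx_comp C1 C2 X : fill (ctx_comp C1 C2) X = fill C1 (fill C2 X).
Proof.
  induction C1; simpl; [destruct C2; simpl; rewrite app_assoc|rewrite IHC1]; auto.
Qed.

Lemma fill_ctx_comp_hole C X Y : fill (ctx_comp C (Hole X)) Y = fill C (X ++ Y).
Proof. apply fill_ctx_comp. Qed.

Lemma ctx_comp_assoc C1 C2 C3 :
  ctx_comp (ctx_comp C1 C2) C3 = ctx_comp C1 (ctx_comp C2 C3).
Proof.
  induction C1; simpl; [destruct C2, C3; simpl; rewrite ?app_assoc|rewrite IHC1]; auto.
Qed.

Lemma neg_involutive A : neg (neg A) = A.
Proof. induction A; simpl; congruence. Qed.

(* [perm_solve] proves [Permutation L R] for lists built from [::] and [++] by moving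
   each element (or list variable) of [L] to the front of [R]. *)
Ltac perm_pull_elt h r :=
  match r with
  | h :: ?t => apply Permutation_refl
  | ?x :: ?t => eapply perm_trans; [apply perm_skip; perm_pull_elt h t | apply perm_swap]
  | ?L ++ ?t => eapply perm_trans;
      [apply Permutation_app_head; perm_pull_elt h t | apply Permutation_sym, Permutation_middle]
  end.

Ltac perm_pull_list L r :=
  match r with
  | L ++ ?t => apply Permutation_refl
  | L => rewrite <- (app_nil_r L) at 1; apply Permutation_refl
  | ?x :: ?t => eapply perm_trans; [apply perm_skip; perm_pull_list L t | apply Permutation_middle]
  | ?M ++ ?t => eapply perm_trans;
      [apply Permutation_app_head; perm_pull_list L t | apply Permutation_app_swap_app]
  end.

Ltac perm_solve_norm :=
  match goal with
  | |- Permutation ?l ?l => apply Permutation_refl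
  | |- Permutation [] ?r => apply Permutation_refl
  | |- Permutation (?h :: ?t) ?r =>
      apply Permutation_sym; eapply perm_trans; [perm_pull_elt h r|];
      apply perm_skip, Permutation_sym; perm_solve_norm
  | |- Permutation (?L ++ ?t) ?r =>
      apply Permutation_sym; eapply perm_trans; [perm_pull_list L r|];
      apply Permutation_app_head, Permutation_sym; perm_solve_norm
  | |- Permutation ?L ?r =>
      apply Permutation_sym; eapply perm_trans; [perm_pull_list L r|];
      rewrite <- (app_nil_r L) at 2; apply Permutation_app_head, Permutation_sym; perm_solve_norm
  end.

Ltac perm_solve := simpl; repeat rewrite <- ?app_assoc, <- ?app_comm_cons; simpl; perm_solve_norm.

Lemma provable_nested_perm C L D Y Y' : Permutation Y Y' ->
  provable (fill C (L ++ [IB (fill D Y)])) -> provable (fill C (L ++ [IB (fill D Y')])).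
Proof.
  assert (E : forall Z, fill C (L ++ [IB (fill D Z)]) = fill (ctx_comp C (Nest L D)) Z)
    by (intros; rewrite fill_ctx_comp; reflexivity).
  rewrite !E; apply provable_perm.
Qed.

Lemma provable_sibling_iff C pre post W :
  provable (fill (ctx_comp C (Nest (pre ++ post) (Hole []))) W) <->
  provable (fill C (pre ++ IB W :: post)).
Proof. rewrite fill_ctx_comp; split; apply provable_perm; perm_solve. Qed.

Lemma provable_id C X a : provable (fill C (IF (NAtom a) :: IF (Atom a) :: X)).
Proof.
  apply provable_perm with (X ++ [IF (NAtom a); IF (Atom a)]); [perm_solve|].
  rewrite <- fill_ctx_comp_hole; apply p_id.
Qed.

Lemma provable_and C X A B :
  provable (fill C (IF A :: X)) -> provable (fill C (IF B :: X)) ->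
  provable (fill C (IF (And A B) :: X)).
Proof.
  intros HA HB; apply provable_perm with (X ++ [IF (And A B)]); [perm_solve|].
  rewrite <- fill_ctx_comp_hole; apply p_and; rewrite fill_ctx_comp_hole;
    [revert HA|revert HB]; apply provable_perm; perm_solve.
Qed.

Lemma provable_or C X A B :
  provable (fill C (IF A :: IF B :: X)) -> provable (fill C (IF (Or A B) :: X)).
Proof.
  intros HAB; apply provable_perm with (X ++ [IF (Or A B)]); [perm_solve|].
  rewrite <- fill_ctx_comp_hole; apply p_or; rewrite fill_ctx_comp_hole;
    revert HAB; apply provable_perm; perm_solve.
Qed.

Lemma provable_box C X A :
  provable (fill C (IB [IF (Dia (neg A)); IF A] :: X)) -> provable (fill C (IF (Box A) :: X)).
Proof.
  intros HA; apply provable_perm with (X ++ [IF (Box A)]); [perm_solve|].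
  rewrite <- fill_ctx_comp_hole; apply p_box; rewrite fill_ctx_comp_hole;
    revert HA; apply provable_perm; perm_solve.
Qed.

Lemma provable_dia C X D A :
  provable (fill C (IF (Dia A) :: IB (fill D [IF A]) :: X)) ->
  provable (fill C (IF (Dia A) :: IB (fill D []) :: X)).
Proof.
  intros HA; apply provable_perm with (X ++ fill (Nest [] D) [] ++ [IF (Dia A)]); [perm_solve|].
  rewrite <- fill_ctx_comp_hole; apply p_dia; [simpl; lia|];
    rewrite fill_ctx_comp_hole; revert HA; apply provable_perm; perm_solve.
Qed.

Lemma provable_gen_id A : forall C X, provable (fill C (IF A :: IF (neg A) :: X)).
Proof.
  induction A as [a|a|A1 IH1 A2 IH2|A1 IH1 A2 IH2|A IH|A IH]; intros C X; simpl.
  - apply provable_perm with (IF (NAtom a) :: IF (Atom a) :: X); [perm_solve|apply provable_id].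
  - apply provable_id.
  - apply provable_and.
    + apply provable_perm with (IF (Or (neg A1) (neg A2)) :: IF A1 :: X); [perm_solve|].
      apply provable_or, provable_perm with (IF A1 :: IF (neg A1) :: IF (neg A2) :: X);
        [perm_solve|apply IH1].
    + apply provable_perm with (IF (Or (neg A1) (neg A2)) :: IF A2 :: X); [perm_solve|].
      apply provable_or, provable_perm with (IF A2 :: IF (neg A2) :: IF (neg A1) :: X);
        [perm_solve|apply IH2].
  - apply provable_or;
      apply provable_perm with (IF (And (neg A1) (neg A2)) :: IF A1 :: IF A2 :: X);
      [perm_solve|apply provable_and].
    + apply provable_perm with (IF A1 :: IF (neg A1) :: IF A2 :: X); [perm_solve|apply IH1].
    + apply provable_perm with (IF A2 :: IF (neg A2) :: IF A1 :: X); [perm_solve|apply IH2].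
  - apply provable_perm with (IF (Box A) :: IF (Dia (neg A)) :: X); [perm_solve|].
    apply provable_box.
    apply provable_perm with
      (IF (Dia (neg A)) :: IB (fill (Hole [IF (Dia (neg A)); IF A]) []) :: X); [perm_solve|].
    apply provable_dia; simpl.
    specialize (IH (ctx_comp C (Nest (IF (Dia (neg A)) :: X) (Hole [IF (Dia (neg A))]))) []).
    rewrite fill_ctx_comp in IH; simpl in IH; revert IH; apply provable_perm; perm_solve.
  - apply provable_perm with (IF (Box (neg A)) :: IF (Dia A) :: X); [perm_solve|].
    apply provable_box; rewrite neg_involutive.
    apply provable_perm with
      (IF (Dia A) :: IB (fill (Hole [IF (Dia A); IF (neg A)]) []) :: X); [perm_solve|].
    apply provable_dia; simpl.
    specialize (IH (ctx_comp C (Nest (IF (Dia A) :: X) (Hole [IF (Dia A)]))) []).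
    rewrite fill_ctx_comp in IH; simpl in IH.
    apply provable_perm with ((IF (Dia A) :: X) ++ [IB [IF (Dia A); IF (neg A); IF A]]);
      [perm_solve|].
    apply (provable_nested_perm C (IF (Dia A) :: X) (Hole []) [IF (Dia A); IF A; IF (neg A)]);
      [perm_solve|exact IH].
Qed.

Definition dia_above (C : ctx) (A : form) : Prop :=
  exists C1 L C2, C = ctx_comp C1 (Nest L C2) /\ In (IF (Dia A)) L.

Lemma dia_above_comp C C' A : dia_above C A -> dia_above (ctx_comp C C') A.
Proof.
  intros (C1 & L & C2 & -> & HL); exists C1, L, (ctx_comp C2 C'); split; auto.
  apply ctx_comp_assoc.
Qed.

Lemma dia_above_nest C L A : In (IF (Dia A)) L -> dia_above (ctx_comp C (Nest L (Hole []))) A.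
Proof. exists C, L, (Hole []); auto. Qed.

Lemma provable_absorb_dia C A X :
  dia_above C A -> provable (fill C (IF A :: X)) -> provable (fill C X).
Proof.
  intros (C1 & L & C2 & -> & HL) HA; rewrite fill_ctx_comp in *; simpl in *.
  apply in_split in HL as (L1 & L2 & ->).
  apply provable_perm with
    (IF (Dia A) :: IB (fill (ctx_comp C2 (Hole X)) []) :: L1 ++ L2);
    [rewrite fill_ctx_comp_hole, app_nil_r; perm_solve|].
  apply provable_dia; rewrite fill_ctx_comp_hole.
  apply provable_perm with ((L1 ++ IF (Dia A) :: L2) ++ [IB (fill C2 (X ++ [IF A]))]);
    [perm_solve|].
  revert HA; apply provable_nested_perm; perm_solve.
Qed.

Lemma provable_absorb_dias C Ds X : (forall A, In A Ds -> dia_above C A) ->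
  provable (fill C (map IF Ds ++ X)) -> provable (fill C X).
Proof.
  induction Ds as [|A Ds IH]; simpl; intros HDs HX; auto.
  apply IH; eauto using provable_absorb_dia.
Qed.

Lemma provable_loop_check C A X :
  dia_above C (neg A) -> provable (fill C (IF (Dia (neg A)) :: IF A :: X)).
Proof.
  intros HA; apply (provable_absorb_dia _ _ _ HA).
  apply provable_perm with (IF A :: IF (neg A) :: IF (Dia (neg A)) :: X);
    [perm_solve|apply provable_gen_id].
Qed.

(** * Soundness for the canonical model *)

Definition child (w v : sequent) : Prop := In (IB v) w.
Definition reach : sequent -> sequent -> Prop := clos_trans sequent child.

Fixpoint item_size (i : item) : nat :=
  match i with
  | IF _ => 1
  | IB V => S (list_sum (map item_size V))
  end.
Definition seq_size (X : sequent) : nat := list_sum (map item_size X).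

Lemma child_size w v : child w v -> seq_size v < seq_size w.
Proof.
  unfold child, seq_size; induction w as [|i w IH]; simpl; [easy|].
  intros [->|Hv]; simpl; [lia|specialize (IH Hv); lia].
Qed.

Lemma reach_size w v : reach w v -> seq_size v < seq_size w.
Proof. induction 1; [apply child_size|lia]; auto. Qed.

Lemma reach_wf : well_founded (fun v w => reach w v).
Proof.
  apply (wf_incl _ _ (fun v w => seq_size v < seq_size w)); [intros ? ?; apply reach_size|].
  apply wf_inverse_image, Wf_nat.lt_wf.
Qed.

Lemma reach_inv w u : reach w u -> exists v, child w v /\ (u = v \/ reach v u).
Proof.
  intros Hwu; apply clos_trans_t1n in Hwu; destruct Hwu as [v Hwv|v u Hwv Hvu]; exists v; auto.
  split; [|right; apply clos_t1n_trans]; auto.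
Qed.

Fixpoint forces (w : sequent) (A : form) : Prop :=
  match A with
  | Atom a => In (IF (NAtom a)) w
  | NAtom a => ~ In (IF (NAtom a)) w
  | And A B => forces w A /\ forces w B
  | Or A B => forces w A \/ forces w B
  | Box A => forall v, reach w v -> forces v A
  | Dia A => exists v, reach w v /\ forces v A
  end.

Lemma forces_neg A : forall w, forces w (neg A) <-> ~ forces w A.
Proof.
  induction A as [a|a|A IHA B IHB|A IHA B IHB|A IHA|A IHA]; intros w; simpl;
    try setoid_rewrite IHA; try setoid_rewrite IHB; try tauto.
  - split; [firstorder|intros Hn].
    apply not_all_ex_not in Hn as [v Hv]; apply imply_to_and in Hv; eauto.
  - firstorder.
Qed.

Fixpoint refutes_item (w : sequent) (i : item) : Prop :=
  match i with
  | IF A => ~ forces w A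
  | IB V => exists v, reach w v /\ fold_right (fun j P => refutes_item v j /\ P) True V
  end.
Definition refutes (w X : sequent) : Prop := Forall (refutes_item w) X.

Lemma refutes_item_IB w V : refutes_item w (IB V) <-> exists v, reach w v /\ refutes v V.
Proof.
  simpl; split; intros (v & Hv & HV); exists v; split; auto;
    apply (fold_right_and_Forall (refutes_item v)); auto.
Qed.

Lemma refutes_seq_eq X Y : seq_eq X Y -> forall w, refutes w X <-> refutes w Y.
Proof.
  unfold refutes; revert X Y.
  apply (seq_eq_mut (fun X Y _ => forall w, Forall (refutes_item w) X <-> Forall (refutes_item w) Y)
                    (fun x y _ => forall w, refutes_item w x <-> refutes_item w y)).
  - tauto.
  - intros x y X Y _ IHxy _ IHXY w; rewrite !Forall_cons_iff, IHxy, IHXY; tauto.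
  - intros x y X w; rewrite !Forall_cons_iff; tauto.
  - intros X Y Z _ IHXY _ IHYZ w; rewrite IHXY; apply IHYZ.
  - tauto.
  - intros V V' _ IH w; rewrite !refutes_item_IB; unfold refutes; setoid_rewrite IH; tauto.
Qed.

Fixpoint refutes_ctx (w : sequent) (C : ctx) (v : sequent) : Prop :=
  match C with
  | Hole D => refutes w D /\ v = w
  | Nest D C' => refutes w D /\ exists u, reach w u /\ refutes_ctx u C' v
  end.

Lemma refutes_fill C : forall w X,
  refutes w (fill C X) <-> exists v, refutes_ctx w C v /\ refutes v X.
Proof.
  unfold refutes; induction C as [D|D C IH]; intros w X; simpl;
    rewrite Forall_app; [firstorder congruence|].
  rewrite Forall_cons_iff, refutes_item_IB; setoid_rewrite IH; firstorder.
Qed.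

Lemma refutes_fill_mono C X Y w :
  (forall v, refutes v X -> refutes v Y) -> refutes w (fill C X) -> refutes w (fill C Y).
Proof. rewrite !refutes_fill; firstorder. Qed.

Lemma refutes_ctx_reach C : forall w v, refutes_ctx w C v -> 0 < depth C -> reach w v.
Proof.
  induction C as [D|D [D'|D' C] IH]; simpl; intros w v HC Hdepth; [lia| |].
  - destruct HC as (_ & u & Hu & _ & ->); auto.
  - destruct HC as (_ & u & Hu & HC); eapply t_trans; eauto; apply IH; simpl; auto; lia.
Qed.

(* Take a counterexample to [A] with none above it: [reach] is conversely well-founded. *)
Lemma loeb_counterexample w A : ~ forces w (Box A) ->
  exists u, reach w u /\ refutes u [IF (Dia (neg A)); IF A].
Proof.
  intros HwA; simpl in HwA; apply not_all_ex_not in HwA as [u HuA];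
    apply imply_to_and in HuA as [Hwu HuA].
  revert Hwu HuA; induction u as [u IH] using (well_founded_ind reach_wf); intros Hwu HuA.
  destruct (classic (forces u (Dia (neg A)))) as [(u' & Huu' & Hu'A)|HuDia].
  - apply forces_neg in Hu'A; apply (IH u'); auto; eapply t_trans; eauto.
  - exists u; split; [exact Hwu|repeat constructor; auto].
Qed.

Theorem provable_not_refuted X : provable X -> forall w, ~ refutes w X.
Proof.
  induction 1 as [X Y HXY _ IH|C a|C A B _ IHA _ IHB|C A B _ IH|C A _ IH|C D A Hdepth _ IH];
    intros w Hw.
  - apply (IH w), (refutes_seq_eq X Y HXY w), Hw.
  - apply refutes_fill in Hw as (v & _ & Hv); inversion_clear Hv as [|? ? Hn Ha];
    inversion_clear Ha as [|? ? Ha' _]; simpl in *; tauto.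
  - apply refutes_fill in Hw as (v & HC & Hv); inversion_clear Hv as [|? ? HvAB _].
    destruct (classic (forces v A)) as [HvA|HvA];
      [apply (IHB w)|apply (IHA w)]; apply refutes_fill; exists v; split; auto; repeat constructor;
      simpl in *; tauto.
  - apply (IH w); revert Hw; apply refutes_fill_mono; intros v Hv.
    inversion_clear Hv as [|? ? HvAB _]; simpl in *; repeat constructor; tauto.
  - apply (IH w); revert Hw; apply refutes_fill_mono; intros v Hv.
    inversion_clear Hv as [|? ? HvA _].
    destruct (loeb_counterexample v A HvA) as (u & Hvu & Hu); repeat constructor.
    apply refutes_item_IB; eauto.
  - apply (IH w); revert Hw; apply refutes_fill_mono; intros v Hv.
    apply Forall_app in Hv as [HvD HvA]; apply Forall_app; split; auto.
    apply refutes_fill in HvD as (u & HD & _); apply refutes_fill; exists u; split; auto.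
    inversion_clear HvA as [|? ? HvA' _]; repeat constructor; simpl in *.
    intros HuA; apply HvA'; exists u; split; auto; eapply refutes_ctx_reach; eauto.
Qed.

(** * Completeness for the canonical model *)

Definition form_eq_dec (A B : form) : {A = B} + {A <> B}.
Proof. decide equality; apply PeanoNat.Nat.eq_dec. Defined.

Fixpoint subformulas (A : form) : list form :=
  A :: match A with
       | And B C | Or B C => subformulas B ++ subformulas C
       | Box B | Dia B => subformulas B
       | _ => []
       end.

Lemma subformulas_refl A : In A (subformulas A).
Proof. destruct A; simpl; auto. Qed.

Lemma subformulas_trans A B C :
  In B (subformulas A) -> In C (subformulas B) -> In C (subformulas A).
Proof.
  induction A; simpl; intros [<-|HB] HC; auto; rewrite ?in_app_iff in *;
    intuition eauto.
Qed.

Lemma subformulas_neg A B : In B (subformulas A) -> In (neg B) (subformulas (neg A)).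
Proof.
  induction A; simpl; intros [<-|HB]; auto; rewrite ?in_app_iff in *; intuition.
Qed.

Definition closure (Fs : list form) : list form :=
  flat_map (fun F => subformulas F ++ subformulas (neg F)) Fs.

Lemma closure_incl Fs : incl Fs (closure Fs).
Proof.
  intros F HF; apply in_flat_map; exists F; split; auto.
  apply in_or_app; auto using subformulas_refl.
Qed.

Lemma closure_sub Fs A B : In A (closure Fs) -> In B (subformulas A) -> In B (closure Fs).
Proof.
  unfold closure; rewrite !in_flat_map; intros (F & HF & HA) HB; exists F; split; auto.
  rewrite in_app_iff in *; destruct HA; eauto using subformulas_trans.
Qed.

Lemma closure_neg Fs A : In A (closure Fs) -> In (neg A) (closure Fs).
Proof.
  unfold closure; rewrite !in_flat_map; intros (F & HF & HA); exists F; split; auto.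
  rewrite in_app_iff in *; destruct HA as [HA|HA]; apply subformulas_neg in HA; auto.
  rewrite neg_involutive in HA; auto.
Qed.

Fixpoint item_forms (i : item) : list form :=
  match i with
  | IF A => [A]
  | IB V => flat_map item_forms V
  end.
Definition forms (X : sequent) : list form := flat_map item_forms X.

Definition dias (X : sequent) : list form :=
  flat_map (fun i => match i with IF (Dia B) => [B] | _ => [] end) X.

Lemma In_dias B X : In B (dias X) <-> In (IF (Dia B)) X.
Proof.
  unfold dias; rewrite in_flat_map; split; [|exists (IF (Dia B)); simpl; auto].
  intros ([[]|] & Hi & HB); simpl in HB; intuition congruence.
Qed.

Definition refutes_below (Ds : list form) (T : sequent) : Prop :=
  forall T', T' = T \/ reach T T' -> forall A, In A Ds -> ~ forces T' A.

Lemma refutes_below_incl Ds Ds' T : incl Ds Ds' -> refutes_below Ds' T -> refutes_below Ds T.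
Proof. intros HDs HT T' HT' A HA; apply (HT T'); auto. Qed.

Lemma refutes_below_children Ds T : (forall T0, child T T0 -> refutes_below Ds T0) ->
  forall T', reach T T' -> forall A, In A Ds -> ~ forces T' A.
Proof.
  intros Hchildren T' HT'; apply reach_inv in HT' as (T0 & HT0 & HT0T').
  apply (Hchildren T0 HT0); auto.
Qed.

Lemma refutes_below_intro Ds T : (forall A, In A Ds -> ~ forces T A) ->
  (forall T0, child T T0 -> refutes_below Ds T0) -> refutes_below Ds T.
Proof.
  intros HT Hchildren T' [->|HT']; [exact HT|]; eapply refutes_below_children; eauto.
Qed.

Definition box_refined (Ds : list form) (x y : item) : Prop :=
  match x, y with
  | IF A, IF B => A = B
  | IB V, IB T => refutes T V /\ refutes_below Ds T
  | _, _ => False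
  end.

Lemma box_refined_IF Ds X Y A : Forall2 (box_refined Ds) X Y -> In (IF A) X -> In (IF A) Y.
Proof.
  intros HXY HA; destruct (Forall2_In_l _ _ _ _ HXY HA) as ([B|T] & HB & HAB);
    simpl in HAB; [subst; auto|easy].
Qed.

Lemma box_refined_child Ds X Y T : Forall2 (box_refined Ds) X Y -> child Y T ->
  exists V, In (IB V) X /\ refutes T V /\ refutes_below Ds T.
Proof.
  intros HXY HT; destruct (Forall2_In_r _ _ _ _ HXY HT) as ([A|V] & HV & HVT);
    simpl in HVT; [easy|eauto].
Qed.

Lemma dia_above_sibling C Ds Ds' pre pre' V post A :
  (forall A, In A Ds -> dia_above C A) -> Forall2 (box_refined Ds') pre pre' ->
  In A (Ds ++ dias (pre ++ IB V :: post)) ->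
  dia_above (ctx_comp C (Nest (pre' ++ post) (Hole []))) A.
Proof.
  intros HDs Hpre HA; apply in_app_iff in HA as [HA|HA]; [apply dia_above_comp; auto|].
  apply dia_above_nest; apply In_dias in HA; rewrite in_app_iff in *; simpl in HA.
  destruct HA as [HA|[HA|HA]]; [left; eapply box_refined_IF; eauto|easy|auto].
Qed.

Lemma dias_app X Y : dias (X ++ Y) = dias X ++ dias Y.
Proof. apply flat_map_app. Qed.

Lemma forms_child U V : In (IB V) U -> incl (forms V) (forms U).
Proof. intros HV F HF; apply in_flat_map; exists (IB V); auto. Qed.

Fixpoint form_size (A : form) : nat :=
  match A with
  | Atom _ | NAtom _ => 1
  | And A B | Or A B => S (form_size A + form_size B)
  | Box A | Dia A => S (form_size A)
  end.

Definition pending_size (X : sequent) : nat :=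
  list_sum (map (fun i => match i with IF A => form_size A | IB _ => 1 end) X).

Definition new_box (A : form) : item := IB [IF (Dia (neg A)); IF A].

Definition refines (X Y : sequent) : Prop :=
  (forall w, refutes w Y -> refutes w X) /\ incl (dias X) (dias Y).

Lemma refines_refl X : refines X X.
Proof. split; auto using incl_refl. Qed.

Lemma refines_trans X Y Z : refines X Y -> refines Y Z -> refines X Z.
Proof. intros [HXY HXYd] [HYZ HYZd]; split; eauto using incl_tran. Qed.

Lemma refines_perm X Y : Permutation X Y -> refines X Y.
Proof.
  intros HXY; split.
  - intros w; apply Permutation_Forall, Permutation_sym, HXY.
  - intros B; rewrite !In_dias; apply Permutation_in, HXY.
Qed.

Lemma refines_head X Y Z : dias X = [] ->
  (forall w, refutes w Y -> refutes w X) -> refines (X ++ Z) (Y ++ Z).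
Proof.
  intros HX HYX; split.
  - unfold refutes; intros w; rewrite !Forall_app; firstorder.
  - unfold dias in *; rewrite !flat_map_app, HX; apply incl_appr, incl_refl.
Qed.

Lemma refines_and A B E X : E = A \/ E = B -> refines (IF (And A B) :: X) (IF E :: X).
Proof.
  intros HE; apply (refines_head [_] [_]); auto.
  intros w Hw; inversion_clear Hw; repeat constructor; simpl in *; destruct HE; subst; tauto.
Qed.

Lemma refines_or A B X : refines (IF (Or A B) :: X) (IF A :: IF B :: X).
Proof.
  apply (refines_head [_] [_; _]); auto.
  intros w Hw; inversion_clear Hw as [|? ? HA HB]; inversion_clear HB;
    repeat constructor; simpl in *; tauto.
Qed.

Lemma refines_box A X : refines (IF (Box A) :: X) (new_box A :: X).
Proof.
  apply (refines_head [_] [_]); auto.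
  intros w Hw; inversion_clear Hw as [|? ? Hbox _].
  apply refutes_item_IB in Hbox as (v & Hwv & Hv); inversion_clear Hv as [|? ? _ Hv'].
  inversion_clear Hv'; repeat constructor; simpl in *; eauto.
Qed.

Lemma unprovable_and C A B X : ~ provable (fill C (IF (And A B) :: X)) ->
  exists E, (E = A \/ E = B) /\ ~ provable (fill C (IF E :: X)).
Proof.
  intros Hunprov; destruct (classic (provable (fill C (IF A :: X)))); [exists B|exists A];
    split; auto; intros HB; apply Hunprov, provable_and; auto.
Qed.

Section Completeness.

Variable Cl : list form.
Hypothesis Cl_sub : forall A B, In A Cl -> In B (subformulas A) -> In B Cl.
Hypothesis Cl_neg : forall A, In A Cl -> In (neg A) Cl.

Ltac Cl_sub_tac H := apply (Cl_sub _ _ H); simpl; rewrite ?in_app_iff; auto using subformulas_refl.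

Inductive saturated_item (U : sequent) : item -> Prop :=
| sat_atom a : saturated_item U (IF (Atom a))
| sat_natom a : saturated_item U (IF (NAtom a))
| sat_dia B : In (Dia B) Cl -> saturated_item U (IF (Dia B))
| sat_old V : In (IB V) U -> saturated_item U (IB V)
| sat_new A : In (Box A) Cl -> saturated_item U (new_box A).

Definition pending (U : sequent) (i : item) : Prop :=
  match i with
  | IF A => In A Cl
  | IB V => In (IB V) U
  end.

(* Saturation applies the invertible rules for [And], [Or] and [Box] to the pending items,
   choosing an unprovable premise of [And]. *)
Lemma saturate C U X : forall todo D : sequent,
  Forall (pending U) todo -> Forall (saturated_item U) D -> ~ provable (fill C (todo ++ D)) ->
  refines X (todo ++ D) ->
  exists D', Forall (saturated_item U) D' /\ ~ provable (fill C D') /\ refines X D'.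
Proof.
  intros todo; induction todo as [todo IH]
    using (well_founded_ind (Wf_nat.well_founded_ltof _ pending_size)).
  intros D Htodo HD Hunprov HX; destruct todo as [|x todo]; [exists D; auto|].
  inversion_clear Htodo as [|? ? Hx Htodo'].
  assert (Hdone : forall y, saturated_item U y -> refines (x :: todo ++ D) (y :: todo ++ D) ->
            ~ provable (fill C (y :: todo ++ D)) ->
            exists D', Forall (saturated_item U) D' /\ ~ provable (fill C D') /\ refines X D').
  { intros y Hy Href Hyunprov; apply (IH todo) with (y :: D); auto.
    - unfold Wf_nat.ltof, pending_size; destruct x as [[]|]; simpl; lia.
    - intros Hprov; apply Hyunprov; revert Hprov; apply provable_perm; perm_solve.
    - eapply refines_trans; [exact HX|eapply refines_trans; [exact Href|]].
      apply refines_perm; perm_solve. }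
  pose proof (Hdone x) as Hdone_x.
  destruct x as [[a|a|A B|A B|A|B]|V]; simpl in Hx;
    try (apply Hdone_x; [constructor; auto|apply refines_refl|auto]).
  - destruct (unprovable_and _ _ _ _ Hunprov) as (E & HE & HEunprov).
    apply (IH (IF E :: todo)) with D; auto.
    + unfold Wf_nat.ltof, pending_size; destruct HE; subst; simpl; lia.
    + constructor; auto; destruct HE; subst; Cl_sub_tac Hx.
    + eapply refines_trans; [exact HX|apply refines_and, HE].
  - apply (IH (IF A :: IF B :: todo)) with D; auto.
    + unfold Wf_nat.ltof, pending_size; simpl; lia.
    + repeat constructor; auto; Cl_sub_tac Hx.
    + intros HAB; apply Hunprov, provable_or; auto.
    + eapply refines_trans; [exact HX|apply refines_or].
  - apply (Hdone (new_box A)); [apply sat_new; auto|apply refines_box|].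
    intros Hprov; apply Hunprov, provable_box, Hprov.
Qed.

Lemma saturated_refuted C U Ds D D' : Forall (saturated_item U) D ->
  Forall2 (box_refined Ds) D D' -> incl (dias D) Ds -> ~ provable (fill C D') -> refutes D' D.
Proof.
  intros HD HDD' HDs HD'unprov; apply Forall_forall; intros x Hx.
  rewrite Forall_forall in HD; destruct x as [F|V].
  2: { destruct (Forall2_In_l _ _ _ _ HDD' Hx) as ([|T] & HT & HVT); simpl in HVT; [easy|].
       apply refutes_item_IB; exists T; split; [apply t_step, HT|apply HVT]. }
  specialize (HD _ Hx); inversion HD as [a|a|B|V|A]; subst; simpl.
  - intros HNa; apply HD'unprov.
    destruct (in_split_pair _ _ D' HNa (box_refined_IF _ _ _ _ HDD' Hx)) as (r & Hr); [easy|].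
    apply (provable_perm C (IF (NAtom a) :: IF (Atom a) :: r)); [apply Permutation_sym, Hr|].
    apply provable_id.
  - intros HNa; apply HNa; eapply box_refined_IF; eauto.
  - intros (T' & HT' & HB); apply (refutes_below_children Ds D') with T' B; auto.
    + intros T0 HT0; apply (box_refined_child _ _ _ _ HDD') in HT0 as (? & ? & ? & ?); auto.
    + apply HDs, In_dias, Hx.
Qed.

Definition unmarked (L : list form) : nat :=
  length (filter (fun F => if in_dec form_eq_dec F L then false else true) Cl).

Lemma unmarked_anti L L' : incl L L' -> unmarked L' <= unmarked L.
Proof.
  intros HLL'; apply filter_length_mono; intros F _.
  destruct (in_dec form_eq_dec F L), (in_dec form_eq_dec F L'); auto.
Qed.

Lemma unmarked_strict L L' F :
  incl L L' -> In F Cl -> ~ In F L -> In F L' -> unmarked L' < unmarked L.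
Proof.
  intros HLL' HF HFL HFL'; apply filter_length_mono_strict with F; auto.
  - intros G _; destruct (in_dec form_eq_dec G L), (in_dec form_eq_dec G L'); auto.
  - destruct (in_dec form_eq_dec F L); tauto.
  - destruct (in_dec form_eq_dec F L'); tauto.
Qed.

(* The termination measure: every recursive call either marks a new formula of [Cl]
   (entering a new box [new_box A] marks [neg A]), or keeps the marks and descends
   into a smaller boxed sequent of [U]. *)
Definition rank (Ds : list form) (U : sequent) : nat := unmarked (Ds ++ dias U).

Lemma rank_mono Ds Ds' U V : incl (Ds ++ dias U) Ds' -> rank Ds' V <= rank Ds U.
Proof. intros HDs; apply unmarked_anti, incl_appl, HDs. Qed.

Lemma rank_new_box Ds Ds' U A : In (Box A) Cl -> incl (Ds ++ dias U) Ds' ->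
  ~ In (neg A) Ds' -> rank Ds' [IF (Dia (neg A)); IF A] < rank Ds U.
Proof.
  intros HA HDs HnegA; apply unmarked_strict with (neg A).
  - apply incl_appl, HDs.
  - apply (Cl_sub (Dia (neg A))); [apply (Cl_neg (Box A) HA)|simpl; auto using subformulas_refl].
  - auto.
  - apply in_or_app; right; apply In_dias; simpl; auto.
Qed.

Lemma forms_new_box A : In (Box A) Cl -> incl (forms [IF (Dia (neg A)); IF A]) Cl.
Proof.
  intros HA F; simpl; intros [<-|[<-|[]]]; [apply (Cl_neg (Box A) HA)|Cl_sub_tac HA].
Qed.

Lemma dias_saturated U D : Forall (saturated_item U) D -> incl (dias D) Cl.
Proof.
  rewrite Forall_forall; intros HD B HB; apply In_dias in HB.
  specialize (HD _ HB); inversion HD as [| |? HBCl| |]; Cl_sub_tac HBCl.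
Qed.

Lemma pending_initial Ds U :
  incl Ds Cl -> incl (forms U) Cl -> Forall (pending U) (map IF Ds ++ U).
Proof.
  intros HDs HU; apply Forall_app; split; apply Forall_forall.
  - intros x (A & <- & HA)%in_map_iff; apply HDs, HA.
  - intros [F|V] Hx; simpl; auto.
    apply HU, in_flat_map; exists (IF F); simpl; auto.
Qed.

Lemma refined_refutes C U Ds D D' : Forall (saturated_item U) D ->
  (forall w, refutes w D -> refutes w (map IF Ds ++ U)) ->
  Forall2 (box_refined (Ds ++ dias D)) D D' -> ~ provable (fill C D') ->
  refutes D' U /\ refutes_below Ds D'.
Proof.
  intros HD HDU HDD' HD'unprov.
  assert (HD'D : refutes D' D) by (eapply saturated_refuted; eauto; apply incl_appr, incl_refl).
  apply HDU, Forall_app in HD'D as [HD'Ds HD'U]; split; [exact HD'U|].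
  apply refutes_below_intro.
  - intros A HA; rewrite Forall_forall in HD'Ds; apply (HD'Ds (IF A)), in_map, HA.
  - intros T0 HT0; apply (box_refined_child _ _ _ _ HDD') in HT0 as (_ & _ & _ & HT0).
    eapply refutes_below_incl; [apply incl_appl, incl_refl|exact HT0].
Qed.

(* The countermodel construction: [Ds] collects the bodies of the diamonds above the hole,
   which every world built for the hole must refute. *)
Lemma refutation_in_context n : forall s Ds C U, rank Ds U <= n -> seq_size U <= s ->
  (forall A, In A Ds -> dia_above C A) -> incl Ds Cl -> incl (forms U) Cl ->
  ~ provable (fill C U) ->
  exists T, ~ provable (fill C T) /\ refutes T U /\ refutes_below Ds T.
Proof.
  induction n as [n IHn] using (well_founded_ind Wf_nat.lt_wf).
  intros s; induction s as [s IHs] using (well_founded_ind Wf_nat.lt_wf).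
  intros Ds C U Hrank Hsize HDs HDsCl HUCl HUunprov.
  destruct (saturate C U (map IF Ds ++ U) (map IF Ds ++ U) [])
    as (D & HD & HDunprov & HUD & HdiasUD); rewrite ?app_nil_r;
    auto using pending_initial, refines_refl.
  { intros Hprov; apply HUunprov; eapply provable_absorb_dias; eauto. }
  rewrite dias_app in HdiasUD.
  set (Ds' := Ds ++ dias D).
  assert (HDsDs' : incl (Ds ++ dias U) Ds') by (apply incl_app; unfold Ds'; eauto with datatypes).
  assert (HDs'Cl : incl Ds' Cl) by (apply incl_app; eauto using dias_saturated).
  destruct (Forall2_stepwise (box_refined Ds') (fun X => ~ provable (fill C X)) D)
    as (D' & HDD' & HD'unprov); [|exact HDunprov|exists D'; split; eauto using refined_refutes].
  intros pre x post pre' HDeq Hpre Hunprov.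
  destruct x as [A|V]; [exists (IF A); simpl; auto|].
  set (C' := ctx_comp C (Nest (pre' ++ post) (Hole []))).
  assert (HDsC' : forall A, In A Ds' -> dia_above C' A)
    by (intros A HA; eapply dia_above_sibling; eauto; rewrite <- HDeq; exact HA).
  assert (HV : saturated_item U (IB V))
    by (rewrite Forall_forall in HD; apply HD; rewrite HDeq; apply in_elt).
  assert (HrefV : exists T, ~ provable (fill C' T) /\ refutes T V /\ refutes_below Ds' T).
  { unfold C'; rewrite <- provable_sibling_iff in Hunprov.
    inversion HV as [| | |? HVU|A HA]; subst.
    - apply (IHs (seq_size V)); auto.
      + apply child_size in HVU; lia.
      + etransitivity; [apply rank_mono, HDsDs'|exact Hrank].
      + eapply incl_tran; [apply forms_child, HVU|exact HUCl].
    - assert (HnegA : ~ In (neg A) Ds')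
        by (intros Hin; apply Hunprov, provable_loop_check; auto).
      apply (IHn (rank Ds' [IF (Dia (neg A)); IF A])) with (seq_size [IF (Dia (neg A)); IF A]);
        auto using forms_new_box.
      eapply PeanoNat.Nat.lt_le_trans; [apply rank_new_box|exact Hrank]; eauto. }
  destruct HrefV as (T & HTunprov & HTV & HTbelow).
  exists (IB T); unfold C' in HTunprov; rewrite provable_sibling_iff in HTunprov; simpl; auto.
Qed.

End Completeness.

Theorem unprovable_refuted X : ~ provable X -> exists T, refutes T X.
Proof.
  intros HX.
  destruct (refutation_in_context (closure (forms X)) (closure_sub _) (closure_neg _)
              _ (seq_size X) [] (Hole []) X (le_n _)) as (T & _ & HT & _); eauto.
  - intros A [].
  - intros A [].
  - apply closure_incl.
Qed.

Theorem mainTheorem11 (G : ctx) (A : form) :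
  provable (fill G [IF A]) -> provable (fill G [IF (neg A)]) ->
  provable (fill G []).
Proof.
  intros HA HnegA; apply NNPP; intros Hunprov.
  destruct (unprovable_refuted _ Hunprov) as (w & Hw).
  apply refutes_fill in Hw as (v & HG & _).
  destruct (classic (forces v A)) as [HvA|HvA];
    [apply (provable_not_refuted _ HnegA w)|apply (provable_not_refuted _ HA w)];
    apply refutes_fill; exists v; split; auto; repeat constructor; simpl.
  - rewrite forces_neg; tauto.
  - exact HvA.
Qed.
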